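(* Let $(X,d)$ be a metric space which is not a singleton, let $p\in[1,\infty)$ and let $(a_n)_{n\in\mathbb{N}^*}$ be a sequence of positive reals with $\sum_{n=0}^\infty a_n<\infty$. Let $\tau_T$ be the Tychonoff topology on $\ell_\infty(X)$ and $\tau_{d_{p,(a_n)}}$ the topology induced by the metric $d_{p,(a_n)}$. Then $\tau_T=\tau_{d_{p,(a_n)}}$ if and only if $(X,d)$ is bounded.
   Context: $\mathbb{N}^*=\{0,1,2,\dots\}$. For a metric space $(X,d)$, $\ell_\infty(X)$ denotes the set of all bounded sequences $(x_n)_{n\in\mathbb{N}^*}$ of elements of $X$. For a sequence $(a_n)$ of nonnegative reals, $p\in[1,\infty)$ and $x=(x_n),y=(y_n)\in\ell_\infty(X)$, $d_{p,(a_n)}(x,y):=\left(\sum_{n=0}^\infty a_n d^p(x_n,y_n)\right)^{1/p}$. The Tychonoff topology on $\ell_\infty(X)$ is the subspace topology induced from the product topology on $\prod_{n\in\mathbb{N}^*}X$, i.e. the topology of coordinatewise convergence. *)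

From Stdlib Require Import Reals Lra List.
Open Scope R_scope.

Record MetricSpace := {
  msC :> Type;
  dist : msC -> msC -> R;
  dist_nonneg : forall x y, 0 <= dist x y;
  dist_eq0 : forall x y, dist x y = 0 <-> x = y;
  dist_sym : forall x y, dist x y = dist y x;
  dist_tri : forall x y z, dist x z <= dist x y + dist y z
}.

Definition rpow (a b : R) : R :=
  if Rle_dec a 0 then 0 else Rpower a b.

Definition bounded_space (X : MetricSpace) : Prop :=
  exists M : R, forall x y : X, dist X x y <= M.

(* ell_infty(X): bounded sequences indexed by N* = {0,1,2,...} *)
Definition ell_inf (X : MetricSpace) (x : nat -> X) : Prop :=
  exists (z : X) (M : R), forall n, dist X (x n) z <= M.

Definition is_dpa (X : MetricSpace) (p : R) (a : nat -> R)
  (x y : nat -> X) (r : R) : Prop :=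
  exists S : R,
    infinite_sum (fun n => a n * rpow (dist X (x n) (y n)) p) S /\
    r = rpow S (1 / p).

Definition open_X (X : MetricSpace) (V : X -> Prop) : Prop :=
  forall x, V x -> exists eps, 0 < eps /\ forall y, dist X x y < eps -> V y.

Definition product_open (X : MetricSpace) (W : (nat -> X) -> Prop) : Prop :=
  forall x, W x ->
    exists (F : list nat) (V : nat -> X -> Prop),
      (forall n, In n F -> open_X X (V n) /\ V n (x n)) /\
      (forall y, (forall n, In n F -> V n (y n)) -> W y).

(* Tychonoff topology on ell_infty(X): subspace topology.
   A subset of ell_infty(X) is represented by a predicate U on nat -> X,
   of which only the values on ell_infty(X) matter. *)
Definition tychonoff_open (X : MetricSpace) (U : (nat -> X) -> Prop) : Prop :=
  exists W, product_open X W /\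
    forall x, ell_inf X x -> (U x <-> W x).

Definition dpa_open (X : MetricSpace) (p : R) (a : nat -> R)
  (U : (nat -> X) -> Prop) : Prop :=
  forall x, ell_inf X x -> U x ->
    exists eps, 0 < eps /\
      forall y r, ell_inf X y -> is_dpa X p a x y r -> r < eps -> U y.

(* If d_p(x,y) < mu then a_n d(x_n,y_n)^p <= d_p(x,y)^p < mu^p, i.e. d(x_n,y_n) < mu a_n^(-1/p)
   for every n: the metric controls every coordinate, so product-open sets are d_p-open.
   Conversely, if d <= M then closeness of the first N coordinates within rho gives
   d_p(x,y)^p <= rho^p A + M^p (tail of sum a_n beyond N), which is small; hence d_p-balls
   contain cylinders.  If X is unbounded, the "weighted ball" of sequences y with
   d(z, y_n) <= lam a_n^(-1/p) for some lam < 1 is d_p-open, but no cylinder around the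
   constant sequence z stays inside it, since a coordinate beyond the cylinder may be moved
   arbitrarily far from z. *)
From Pilot Require Import Defs.
From Stdlib Require Import Reals Lra Lia List Classical.
Open Scope R_scope.

Lemma rpow_ge0 u b : 0 <= rpow u b.
Proof. unfold rpow; destruct (Rle_dec u 0); [lra | left; apply exp_pos]. Qed.

Lemma rpow_Rpower u b : 0 < u -> rpow u b = Rpower u b.
Proof. intro Hu; unfold rpow; destruct (Rle_dec u 0); [lra | reflexivity]. Qed.

Lemma rpow_gt0 u b : 0 < u -> 0 < rpow u b.
Proof. intro Hu; rewrite rpow_Rpower by exact Hu; apply exp_pos. Qed.

Lemma rpow_le u v b : 0 < b -> u <= v -> rpow u b <= rpow v b.
Proof.
  intros Hb Huv; destruct (Rle_dec u 0) as [Hu | Hu].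
  - unfold rpow at 1; destruct (Rle_dec u 0); [apply rpow_ge0 | lra].
  - rewrite !rpow_Rpower by lra; apply Rle_Rpower_l; lra.
Qed.

Lemma rpow_lt u v b : 0 < b -> u < v -> 0 < v -> rpow u b < rpow v b.
Proof.
  intros Hb Huv Hv; destruct (Rle_dec u 0) as [Hu | Hu].
  - unfold rpow at 1; destruct (Rle_dec u 0); [apply rpow_gt0, Hv | lra].
  - rewrite !rpow_Rpower by lra; apply Rlt_Rpower_l; lra.
Qed.

Lemma rpow_rpow u b c : 0 < u -> rpow (rpow u b) c = rpow u (b * c).
Proof.
  intro Hu; rewrite (rpow_Rpower u b) by exact Hu.
  rewrite !rpow_Rpower by (exact Hu || apply exp_pos); apply Rpower_mult.
Qed.

Lemma rpow_inv_rpow u b : 0 < u -> 0 < b -> rpow (rpow u b) (1 / b) = u.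
Proof.
  intros Hu Hb; rewrite rpow_rpow, rpow_Rpower by exact Hu.
  replace (b * (1 / b)) with 1 by (field; lra); apply Rpower_1, Hu.
Qed.

Lemma rpow_rpow_inv u b : 0 < u -> 0 < b -> rpow (rpow u (1 / b)) b = u.
Proof.
  intros Hu Hb; rewrite rpow_rpow, rpow_Rpower by exact Hu.
  replace (1 / b * b) with 1 by (field; lra); apply Rpower_1, Hu.
Qed.

Lemma rpow_mult u v b : 0 < u -> 0 < v -> rpow (u * v) b = rpow u b * rpow v b.
Proof.
  intros Hu Hv; rewrite !rpow_Rpower by (try apply Rmult_lt_0_compat; assumption).
  symmetry; apply Rpower_mult_distr; assumption.
Qed.

Lemma rpow_root_lt S b mu : 0 < b -> 0 < mu -> rpow S (1 / b) < mu <-> S < rpow mu b.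
Proof.
  intros Hb Hmu; assert (Hb' : 0 < 1 / b) by (apply Rdiv_lt_0_compat; lra); split.
  - intro HS; apply Rnot_le_lt; intro Hle.
    apply (rpow_le _ _ _ Hb') in Hle; rewrite rpow_inv_rpow in Hle by assumption; lra.
  - intro HS; rewrite <- (rpow_inv_rpow mu b) by assumption.
    apply rpow_lt; [exact Hb' | exact HS | apply rpow_gt0, Hmu].
Qed.

Lemma infinite_sum_term_le (b : nat -> R) S n :
  (forall k, 0 <= b k) -> infinite_sum b S -> b n <= S.
Proof.
  intros Hb HS; apply Rle_trans with (sum_f_R0 b n); [| apply sum_incr; assumption].
  destruct n as [| n]; simpl; [lra |]; pose proof (cond_pos_sum b n Hb); lra.
Qed.

Lemma infinite_sum_le_of_partial (b : nat -> R) S B :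
  infinite_sum b S -> (forall m, sum_f_R0 b m <= B) -> S <= B.
Proof.
  intros HS Hm; apply (@Rle_cv_lim _ (fun _ => B) _ _ Hm HS).
  intros e He; exists 0%nat; intros; unfold Rdist; rewrite Rminus_diag, Rabs_R0; lra.
Qed.

Lemma infinite_sum_scal (b : nat -> R) S c :
  infinite_sum b S -> infinite_sum (fun k => c * b k) (c * S).
Proof.
  intro HS; apply (Un_cv_ext (fun m => c * sum_f_R0 b m)).
  - intro m; rewrite scal_sum; apply sum_eq; intros; ring.
  - apply (CV_mult (fun _ => c)); [| exact HS].
    intros e He; exists 0%nat; intros; unfold Rdist; rewrite Rminus_diag, Rabs_R0; lra.
Qed.

Lemma partial_sum_head_tail_le (a b : nat -> R) delta K N :
  (forall k, (k <= N)%nat -> b k <= delta * a k) ->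
  (forall k, (N < k)%nat -> b k <= K * a k) ->
  forall m, sum_f_R0 b m <=
    delta * sum_f_R0 a (Nat.min m N) + K * (sum_f_R0 a m - sum_f_R0 a (Nat.min m N)).
Proof.
  intros Hhead Htail m; induction m as [| m IH].
  - replace (Nat.min 0 N) with 0%nat by lia; simpl; specialize (Hhead 0%nat (Nat.le_0_l _)); lra.
  - simpl sum_f_R0 at 1 3; destruct (Nat.leb_spec (S m) N) as [HmN | HmN].
    + replace (Nat.min (S m) N) with (S m) by lia.
      replace (Nat.min m N) with m in IH by lia.
      simpl sum_f_R0; specialize (Hhead (S m) HmN); lra.
    + replace (Nat.min (S m) N) with N by lia.
      replace (Nat.min m N) with N in IH by lia.
      specialize (Htail (S m) HmN); lra.
Qed.

Lemma infinite_sum_head_tail_le (a b : nat -> R) A S delta K N :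
  (forall k, 0 <= a k) -> 0 <= delta -> 0 <= K ->
  infinite_sum a A -> infinite_sum b S ->
  (forall k, (k <= N)%nat -> b k <= delta * a k) ->
  (forall k, (N < k)%nat -> b k <= K * a k) ->
  S <= delta * A + K * (A - sum_f_R0 a N).
Proof.
  intros Ha Hdelta HK HA HS Hhead Htail.
  apply (infinite_sum_le_of_partial _ _ _ HS); intro m.
  eapply Rle_trans; [apply (partial_sum_head_tail_le a b delta K N Hhead Htail) |].
  pose proof (sum_incr a (Nat.min m N) A HA Ha) as Hmin.
  assert (Htl : sum_f_R0 a m - sum_f_R0 a (Nat.min m N) <= A - sum_f_R0 a N).
  { destruct (Nat.leb_spec m N) as [HmN | HmN].
    - replace (Nat.min m N) with m by lia; pose proof (sum_incr a N A HA Ha); lra.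
    - replace (Nat.min m N) with N by lia; pose proof (sum_incr a m A HA Ha); lra. }
  nra.
Qed.

Lemma exists_pos_on_list (P : nat -> R -> Prop) (F : list nat) :
  (forall n e e', 0 < e' -> e' <= e -> P n e -> P n e') ->
  (forall n, In n F -> exists e, 0 < e /\ P n e) ->
  exists e, 0 < e /\ forall n, In n F -> P n e.
Proof.
  intros Hmono; induction F as [| k F IH]; intro HF.
  - exists 1; split; [lra | intros n []].
  - destruct IH as [e1 [He1 H1]]; [intros n Hn; apply HF; right; exact Hn |].
    destruct (HF k (or_introl eq_refl)) as [e2 [He2 H2]].
    assert (Hmin : 0 < Rmin e1 e2) by (apply Rmin_pos; assumption).
    exists (Rmin e1 e2); split; [exact Hmin |]; intros n [<- | Hn].
    + exact (Hmono k e2 _ Hmin (Rmin_r _ _) H2).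
    + exact (Hmono n e1 _ Hmin (Rmin_l _ _) (H1 n Hn)).
Qed.

Lemma open_X_ball (X : MetricSpace) (c : X) rho : open_X X (fun w => Defs.dist X c w < rho).
Proof.
  intros w Hw; exists (rho - Defs.dist X c w); split; [lra |].
  intros v Hv; pose proof (Defs.dist_tri X c w v); lra.
Qed.

Lemma dist_self (X : MetricSpace) (x : X) : Defs.dist X x x = 0.
Proof. apply Defs.dist_eq0; reflexivity. Qed.

Lemma not_bounded_far_point (X : MetricSpace) (z : X) r :
  ~ bounded_space X -> exists w, r < Defs.dist X z w.
Proof.
  intro Hnb; apply NNPP; intro Hnear; apply Hnb; exists (2 * r); intros u v.
  assert (Hr : forall w, Defs.dist X z w <= r)
    by (intro w; apply Rnot_lt_le; intro; apply Hnear; exists w; assumption).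
  pose proof (Defs.dist_tri X u z v); pose proof (Defs.dist_sym X u z).
  pose proof (Hr u); pose proof (Hr v); lra.
Qed.

Section WeightedDistance.

Variables (X : MetricSpace) (p : R) (a : nat -> R).
Hypothesis hp : 0 < p.
Hypothesis ha : forall n, 0 < a n.

(* a_n^(-1/p): the largest coordinate displacement allowed by a d_p-ball of radius 1. *)
Definition weight n := rpow (/ a n) (1 / p).

Lemma weight_gt0 n : 0 < weight n.
Proof. apply rpow_gt0, Rinv_0_lt_compat, ha. Qed.

Lemma is_dpa_coord_lt x y r mu : 0 < mu -> is_dpa X p a x y r -> r < mu ->
  forall n, Defs.dist X (x n) (y n) < mu * weight n.
Proof.
  intros Hmu [S [HS ->]] Hr n.
  assert (Hterms : forall k, 0 <= a k * rpow (Defs.dist X (x k) (y k)) p)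
    by (intro k; apply Rmult_le_pos; [left; apply ha | apply rpow_ge0]).
  assert (Hsum : S < rpow mu p) by (apply rpow_root_lt; assumption).
  pose proof (infinite_sum_term_le _ _ n Hterms HS) as Hterm.
  apply Rnot_le_lt; intro Hfar.
  assert (Hwn := weight_gt0 n).
  apply (rpow_le _ _ _ hp) in Hfar.
  rewrite rpow_mult in Hfar by nra; unfold weight in Hfar.
  rewrite rpow_rpow_inv in Hfar by (try apply Rinv_0_lt_compat, ha; nra).
  assert (Han := ha n).
  assert (Hscaled : a n * (rpow mu p * / a n) <= a n * rpow (Defs.dist X (x n) (y n)) p)
    by (apply Rmult_le_compat_l; lra).
  replace (a n * (rpow mu p * / a n)) with (rpow mu p) in Hscaled by (field; lra).
  lra.
Qed.

Lemma tychonoff_open_dpa_open U : tychonoff_open X U -> dpa_open X p a U.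
Proof.
  intros [W [HW HUW]] x Hx HUx.
  apply HUW in HUx; [| exact Hx].
  destruct (HW x HUx) as [F [V [HV HWV]]].
  destruct (exists_pos_on_list
              (fun n mu => forall w, Defs.dist X (x n) w < mu * weight n -> V n w) F)
    as [mu [Hmu Hcyl]].
  - intros n e e' He' Hle HVe w Hw; apply HVe.
    pose proof (weight_gt0 n); nra.
  - intros n Hn; destruct (HV n Hn) as [Hopen Hxn].
    destruct (Hopen _ Hxn) as [eps [Heps Hball]].
    pose proof (weight_gt0 n).
    exists (eps / weight n); split; [apply Rdiv_lt_0_compat; assumption |].
    intros w Hw; apply Hball.
    replace (eps / weight n * weight n) with eps in Hw by (field; lra); exact Hw.
  - exists mu; split; [exact Hmu |]; intros y r Hy Hd Hr.
    apply HUW; [exact Hy |]; apply HWV; intros n Hn.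
    apply Hcyl; [exact Hn |]; exact (is_dpa_coord_lt x y r mu Hmu Hd Hr n).
Qed.

Definition weighted_ball (z : X) (y : nat -> X) : Prop :=
  exists lam, lam < 1 /\ forall n, Defs.dist X z (y n) <= lam * weight n.

Lemma weighted_ball_dpa_open z : dpa_open X p a (weighted_ball z).
Proof.
  intros x Hx [lam [Hlam Hxz]]; exists ((1 - lam) / 2); split; [lra |].
  intros y r Hy Hd Hr; exists (lam + (1 - lam) / 2); split; [lra |]; intro n.
  pose proof (is_dpa_coord_lt x y r ((1 - lam) / 2) ltac:(lra) Hd Hr n).
  pose proof (Defs.dist_tri X z (x n) (y n)); specialize (Hxz n).
  rewrite Rmult_plus_distr_r; lra.
Qed.

(* A cylinder around the constant sequence z leaves a coordinate N free; put there a point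
   farther from z than weight N. *)
Lemma weighted_ball_not_tychonoff_open z :
  ~ bounded_space X -> ~ tychonoff_open X (weighted_ball z).
Proof.
  intros Hnb [W [HW HUW]].
  set (zs := fun _ : nat => z).
  assert (Hzs : ell_inf X zs) by (exists z, 0; intro; unfold zs; rewrite dist_self; lra).
  assert (HWz : W zs).
  { apply HUW; [exact Hzs |]; exists 0; split; [lra |]; intro n; unfold zs.
    rewrite dist_self; pose proof (weight_gt0 n); lra. }
  destruct (HW zs HWz) as [F [V [HV HWV]]].
  set (N := S (list_max F)).
  destruct (not_bounded_far_point X z (weight N) Hnb) as [w Hw].
  set (y := fun n => if Nat.eq_dec n N then w else z).
  assert (HWy : W y).
  { apply HWV; intros n Hn; unfold y; destruct (Nat.eq_dec n N) as [-> | _].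
    - exfalso; pose proof (proj1 (list_max_le F _) (le_n _)) as Hmax.
      rewrite Forall_forall in Hmax; specialize (Hmax N Hn); unfold N in Hmax; lia.
    - exact (proj2 (HV n Hn)). }
  assert (Hy : ell_inf X y).
  { exists z, (Defs.dist X w z); intro n; unfold y; destruct (Nat.eq_dec n N); [lra |].
    rewrite dist_self; apply Defs.dist_nonneg. }
  apply HUW in HWy; [| exact Hy].
  destruct HWy as [lam [Hlam Hyz]]; specialize (Hyz N); unfold y in Hyz.
  destruct (Nat.eq_dec N N) as [_ | []]; [| reflexivity].
  pose proof (weight_gt0 N); nra.
Qed.

End WeightedDistance.

Section BoundedSpace.

Variables (X : MetricSpace) (p : R) (a : nat -> R) (A M : R).
Hypothesis hp : 0 < p.
Hypothesis ha : forall n, 0 < a n.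
Hypothesis hA : infinite_sum a A.
Hypothesis hM : forall x y : X, Defs.dist X x y <= M.

Lemma A_gt0 : 0 < A.
Proof.
  apply Rlt_le_trans with (a 0%nat); [apply ha |].
  apply infinite_sum_term_le; [intro; left; apply ha | exact hA].
Qed.

Lemma rpow_dist_le_bound (x y : X) : rpow (Defs.dist X x y) p <= rpow (Rmax M 1) p.
Proof. apply rpow_le; [exact hp |]; eapply Rle_trans; [apply hM | apply Rmax_l]. Qed.

Lemma is_dpa_exists (x y : nat -> X) : exists r, is_dpa X p a x y r.
Proof.
  set (K := rpow (Rmax M 1) p).
  destruct (Rseries_CV_comp (fun k => a k * rpow (Defs.dist X (x k) (y k)) p) (fun k => K * a k))
    as [S HS].
  - intro k; pose proof (ha k); pose proof (rpow_dist_le_bound (x k) (y k)); split.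
    + apply Rmult_le_pos; [lra | apply rpow_ge0].
    + unfold K; nra.
  - exists (K * A); exact (infinite_sum_scal a A K hA).
  - exists (rpow S (1 / p)), S; split; [exact HS | reflexivity].
Qed.

Definition head_close (x y : nat -> X) N rho :=
  forall n, (n <= N)%nat -> Defs.dist X (x n) (y n) < rho.

(* The head coordinates contribute at most rho^p A, the others at most max(M,1)^p times the
   tail of sum a_n; both are made smaller than eps^p / 2. *)
Lemma head_close_dpa_lt eps : 0 < eps ->
  exists rho N, 0 < rho /\
    forall x y r, head_close x y N rho -> is_dpa X p a x y r -> r < eps.
Proof.
  intro Heps.
  set (c := rpow eps p); assert (Hc : 0 < c) by (apply rpow_gt0, Heps).
  set (K := rpow (Rmax M 1) p).
  assert (HK : 0 < K) by (apply rpow_gt0; pose proof (Rmax_r M 1); lra).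
  assert (HA := A_gt0).
  set (delta := c / (2 * A)).
  assert (Hdelta : 0 < delta) by (apply Rdiv_lt_0_compat; lra).
  destruct (hA (c / (2 * K)) ltac:(apply Rdiv_lt_0_compat; lra)) as [N HN].
  assert (Htail : K * (A - sum_f_R0 a N) < c / 2).
  { specialize (HN N (le_n _)); unfold Rdist in HN; apply Rabs_def2 in HN.
    apply Rmult_lt_reg_r with (/ K); [apply Rinv_0_lt_compat, HK |].
    replace (K * (A - sum_f_R0 a N) * / K) with (A - sum_f_R0 a N) by (field; lra).
    replace (c / 2 * / K) with (c / (2 * K)) by (field; lra); lra. }
  exists (rpow delta (1 / p)), N; split; [apply rpow_gt0, Hdelta |].
  intros x y r Hclose [S [HS ->]].
  assert (HSle : S <= delta * A + K * (A - sum_f_R0 a N)).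
  { apply (infinite_sum_head_tail_le a (fun k => a k * rpow (Defs.dist X (x k) (y k)) p)
             A S delta K N); try (intro; left; apply ha); try lra; [exact hA | exact HS | |].
    - intros k Hk; pose proof (ha k).
      assert (rpow (Defs.dist X (x k) (y k)) p <= delta); [| nra].
      rewrite <- (rpow_rpow_inv delta p) by assumption.
      apply rpow_le; [exact hp | left; apply Hclose, Hk].
    - intros k _; pose proof (ha k); pose proof (rpow_dist_le_bound (x k) (y k)); unfold K; nra. }
  apply rpow_root_lt; [exact hp | exact Heps |].
  fold c; replace (delta * A) with (c / 2) in HSle by (unfold delta; field; lra); lra.
Qed.

Lemma product_open_head_close (x : nat -> X) N rho :
  product_open X (fun y => head_close x y N rho).
Proof.
  intros y Hy; exists (seq 0 (S N)), (fun n w => Defs.dist X (x n) w < rho); split.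
  - intros n Hn; apply in_seq in Hn; split; [apply open_X_ball | apply Hy; lia].
  - intros y' Hy' n Hn; apply Hy', in_seq; lia.
Qed.

(* The product-open witness is the union of all cylinders that stay inside U. *)
Lemma dpa_open_tychonoff_open U : dpa_open X p a U -> tychonoff_open X U.
Proof.
  intro HU.
  exists (fun y => exists x N rho, U x /\
            (forall z, ell_inf X z -> head_close x z N rho -> U z) /\ head_close x y N rho).
  split.
  - intros y [x [N [rho [HUx [Hcyl Hy]]]]].
    destruct (product_open_head_close x N rho y Hy) as [F [V [HV HFV]]].
    exists F, V; split; [exact HV |].
    intros y' Hy'; exists x, N, rho; split; [exact HUx | split; [exact Hcyl | exact (HFV y' Hy')]].
  - intros x Hx; split.
    + intro HUx; destruct (HU x Hx HUx) as [eps [Heps Hball]].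
      destruct (head_close_dpa_lt eps Heps) as [rho [N [Hrho Hsmall]]].
      exists x, N, rho; split; [exact HUx | split].
      * intros z Hz Hclose; destruct (is_dpa_exists x z) as [r Hr].
        exact (Hball z r Hz Hr (Hsmall x z r Hclose Hr)).
      * intros n _; rewrite dist_self; exact Hrho.
    + intros [x' [N [rho [_ [Hcyl Hx']]]]]; exact (Hcyl x Hx Hx').
Qed.

End BoundedSpace.

Theorem mainTheorem4 (X : MetricSpace)
  (hX : exists x y : X, x <> y)
  (p : R) (hp : 1 <= p)
  (a : nat -> R) (ha : forall n, 0 < a n)
  (hsum : exists S, infinite_sum a S) :
  (forall U : (nat -> X) -> Prop, tychonoff_open X U <-> dpa_open X p a U)
  <-> bounded_space X.
Proof.
  assert (hp0 : 0 < p) by lra.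
  split.
  - intro Hsame; apply NNPP; intro Hnb.
    destruct hX as [z _].
    apply (weighted_ball_not_tychonoff_open X p a ha z Hnb), Hsame.
    apply weighted_ball_dpa_open; assumption.
  - intros [M hM] U; destruct hsum as [A hA]; split.
    + apply tychonoff_open_dpa_open; assumption.
    + apply (dpa_open_tychonoff_open X p a A M); assumption.
Qed.
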